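(* Let $n\ge 2$. The Haj\'os number of the symmetric cycle $D(C_{2^n+1})$ of order $2^n+1$ is at most $$\frac{n\left(2^{n+2}+n+5\right)}{2}-7.$$ Moreover, for every integer $m$ with $2^{n-1}+1<2m+1<2^n+1$, the Haj\'os number of the symmetric cycle $D(C_{2m+1})$ of order $2m+1$ is at most $$\frac{n\left(2^{n+2}+n+5\right)}{2}-5.$$
   Context: Digraphs are finite, without loops or multiple arcs. For a graph $G$, $D(G)$ is the symmetric digraph obtained by replacing each edge by a pair of opposite arcs; $D(K_3)$ is the complete symmetric digraph on 3 vertices and $D(C_k)$ the symmetric cycle of order $k$. The dichromatic number of a digraph is the minimum number of colors in a vertex coloring with no monochromatic directed cycle; odd symmetric cycles have dichromatic number 3. The directed Haj\'os operations are: (1) identifying a nonempty independent set $I$ of vertices: delete $I$, add a new vertex $v$, and add all arcs from $v$ to $\bigcup_{u\in I}N^+(u)$ and from $\bigcup_{u\in I}N^-(u)$ to $v$; (2) the directed Haj\'os join $(D_1,u_1,v_1)\triangledown(D_2,v_2,u_2)$ of disjoint digraphs $D_1,D_2$ with $u_1v_1\in A(D_1)$, $v_2u_2\in A(D_2)$: take the disjoint union, delete the arcs $u_1v_1$ and $v_2u_2$, identify $v_1$ and $v_2$ into a single vertex, and add the arc $u_1u_2$. The Haj\'os number of an $r$-dichromatic digraph $H$ is the minimum number of directed Haj\'os operations needed to obtain $H$ (up to isomorphism) from copies of the complete symmetric digraph $D(K_r)$, operations being applied to copies of $D(K_r)$ and to previously obtained digraphs. *)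

From mathcomp Require Import all_boot.
From Stdlib Require List.
Set Implicit Arguments. Unset Strict Implicit. Unset Printing Implicit Defensive.

Record digraph := Digraph { dsize : nat; darc : rel 'I_dsize }.
Arguments darc : clear implicits.

Definition diso (D1 D2 : digraph) : Prop :=
  exists f : 'I_(dsize D1) -> 'I_(dsize D2),
    bijective f /\ forall x y, darc D2 (f x) (f y) = darc D1 x y.

Definition DK (r : nat) : digraph := @Digraph r (fun i j => i != j).

Definition DC (k : nat) : digraph :=
  @Digraph k (fun i j => (nat_of_ord j == i.+1 %% k) || (nat_of_ord i == j.+1 %% k)).

(* D' is (isomorphic to) the digraph obtained from D by identifying the
   nonempty independent set I into a single new vertex.  phi is the quotient
   map: injective outside I, collapsing I to one vertex not hit by V\I,
   surjective, and the arcs of D' are exactly the images of the arcs of D. *)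
Definition identify_result (D : digraph) (I : {set 'I_(dsize D)}) (D' : digraph) : Prop :=
  I != set0 /\
  (forall x y, x \in I -> y \in I -> darc D x y = false) /\
  exists phi : 'I_(dsize D) -> 'I_(dsize D'),
    (forall x y, x \notin I -> y \notin I -> phi x = phi y -> x = y) /\
    (forall x y, x \in I -> y \in I -> phi x = phi y) /\
    (forall x y, x \in I -> y \notin I -> phi x <> phi y) /\
    (forall z, exists x, phi x = z) /\
    (forall a b, darc D' a b <->
       exists x y, [/\ phi x = a, phi y = b & darc D x y]).

(* D' is (isomorphic to) the directed Hajos join (D1,u1,v1) \/ (D2,v2,u2)
   of disjoint copies of D1 and D2.  phi1, phi2 embed the copies, whose images
   meet exactly in the identified vertex phi1 v1 = phi2 v2 and cover D'. *)
Definition hajos_join_result (D1 D2 : digraph)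
    (u1 v1 : 'I_(dsize D1)) (v2 u2 : 'I_(dsize D2)) (D' : digraph) : Prop :=
  darc D1 u1 v1 /\ darc D2 v2 u2 /\
  exists (phi1 : 'I_(dsize D1) -> 'I_(dsize D'))
         (phi2 : 'I_(dsize D2) -> 'I_(dsize D')),
    injective phi1 /\ injective phi2 /\
    (forall x y, phi1 x = phi2 y <-> x = v1 /\ y = v2) /\
    (forall z, (exists x, phi1 x = z) \/ (exists y, phi2 y = z)) /\
    (forall a b, darc D' a b <->
       [\/ a = phi1 u1 /\ b = phi2 u2,
           exists x y, [/\ phi1 x = a, phi1 y = b, darc D1 x y & (x, y) <> (u1, v1)]
         | exists x y, [/\ phi2 x = a, phi2 y = b, darc D2 x y & (x, y) <> (v2, u2)]]).

(* hconstr r s k : s is a directed Hajos construction sequence starting from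
   copies of D(K_r), using k directed Hajos operations in total. *)
Inductive hconstr (r : nat) : seq digraph -> nat -> Prop :=
| hc_nil : hconstr r [::] 0
| hc_base s k D : hconstr r s k -> diso D (DK r) -> hconstr r (rcons s D) k
| hc_ident s k D I D' : hconstr r s k -> List.In D s ->
    identify_result (D := D) I D' -> hconstr r (rcons s D') k.+1
| hc_join s k D1 D2 u1 v1 v2 u2 D' : hconstr r s k -> List.In D1 s -> List.In D2 s ->
    hajos_join_result (D1 := D1) (D2 := D2) u1 v1 v2 u2 D' ->
    hconstr r (rcons s D') k.+1.

Definition hajos_number_le (r : nat) (H : digraph) (B : nat) : Prop :=
  exists s k D, [/\ hconstr r (rcons s D) k, diso D H & k <= B].

(* D(C_3) is D(K_3), and D(C_(2q+1)) arises from D(C_(2q+2j+1)) by two identifications (the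
   even and the odd vertices of a path of length 2j), so everything rests on building
   D(C_(2^n+1)) cheaply.  Put m = 2^n and L = 2m+1.  The Hajos join of two copies of
   D(C_(m+1)) is D(C_L) with one arc removed and two chords i -> i+m.  Joining two such
   chorded L-cycles along one chord of each and then identifying the remaining L-1 pairs of
   vertices of suitably rotated copies costs L operations and leaves the L-cycle carrying the
   other chords of both copies.  A first round on two copies of the join leaves chords at 0
   and m-1; each further round moves the second chord from e to 2e+m (mod L), reaching 1
   after n-1 rounds, and two more rounds remove the chords.  Passing from D(C_(m+1)) to D(C_(2m+1)) thus costs 1 + (n+2)L operations,
   and summing over n gives the bound. *)

From mathcomp Require Import all_boot zify.
Set Implicit Arguments. Unset Strict Implicit. Unset Printing Implicit Defensive.

Lemma diso_refl D : diso D D.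
Proof. by exists id; split=> //; exists id. Qed.

Lemma diso_trans A B C : diso A B -> diso B C -> diso A C.
Proof.
move=> [f [bf af]] [g [bg ag]]; exists (g \o f); split; first exact: bij_comp.
by move=> x y /=; rewrite ag af.
Qed.

Lemma incl_rcons (T : Type) (s : seq T) x : List.incl s (rcons s x).
Proof. by rewrite -cats1; apply: List.incl_appl; apply: List.incl_refl. Qed.

Lemma In_rcons_last (T : Type) (s : seq T) x : List.In x (rcons s x).
Proof. by rewrite -cats1; apply: List.in_or_app; right; left. Qed.

(** * Identification and Hajos join *)

Definition loopless (H : digraph) := forall a, darc H a a = false.

Section Identification.
Variables (X : digraph) (I : {set 'I_(dsize X)}) (i0 : 'I_(dsize X)).
Hypothesis i0I : i0 \in I.

Local Notation V := {x : 'I_(dsize X) | (x \notin I) || (x == i0)}.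

Definition collapse_to_i0 x := if x \in I then i0 else x.

Lemma collapse_to_i0_kept x : (collapse_to_i0 x \notin I) || (collapse_to_i0 x == i0).
Proof. by rewrite /collapse_to_i0; case: ifP => [_|->]; rewrite ?eqxx ?orbT. Qed.

Definition identify_map x : 'I_#|{: V}| :=
  enum_rank (exist (fun y => (y \notin I) || (y == i0)) _ (collapse_to_i0_kept x)).

Definition identify : digraph := @Digraph #|{: V}| (fun a b =>
  [exists x, exists y, [&& identify_map x == a, identify_map y == b & darc X x y]]).

Lemma identify_mapK x : val (enum_val (identify_map x)) = collapse_to_i0 x.
Proof. by rewrite enum_rankK. Qed.

Lemma identify_result_identify :
  (forall x y, x \in I -> y \in I -> darc X x y = false) -> identify_result I identify.
Proof.
move=> indI; split; first by apply/set0Pn; exists i0.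
split=> //; exists identify_map.
have eq_map x y : identify_map x = identify_map y -> collapse_to_i0 x = collapse_to_i0 y.
  by move=> /(congr1 (fun a => val (enum_val a))); rewrite !identify_mapK.
split; [|split; [|split; [|split]]].
- by move=> x y /negbTE xI /negbTE yI /eq_map; rewrite /collapse_to_i0 xI yI.
- move=> x y xI yI; apply: enum_val_inj; apply: val_inj.
  by rewrite !identify_mapK /collapse_to_i0 xI yI.
- move=> x y xI /negbTE yI /eq_map; rewrite /collapse_to_i0 xI yI => ey.
  by move: i0I; rewrite ey yI.
- move=> a; exists (val (enum_val a)).
  rewrite -[RHS]enum_valK; congr enum_rank; apply: val_inj => /=.
  rewrite /collapse_to_i0; case: ifP => // xI.
  by have := valP (enum_val a); rewrite xI => /eqP.
- move=> a b; split.
    by move=> /existsP [x /existsP [y /and3P [/eqP <- /eqP <- xy]]]; exists x, y.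
  move=> [x [y [<- <- xy]]].
  by apply/existsP; exists x; apply/existsP; exists y; rewrite !eqxx.
Qed.

End Identification.

Definition collapse (X H : digraph) (h : 'I_(dsize X) -> 'I_(dsize H)) (T : {set 'I_(dsize H)}) :=
  [/\ forall x y, darc X x y -> darc H (h x) (h y),
      forall a b, darc H a b -> exists x y, [/\ h x = a, h y = b & darc X x y],
      forall a, exists x, h x = a
    & forall x y, h x = h y -> h x \notin T -> x = y].

Section Collapse.
Variables (X H : digraph).
Implicit Type h : 'I_(dsize X) -> 'I_(dsize H).

Lemma collapse_diso h : collapse h set0 -> diso X H.
Proof.
move=> [hom cov surj inj].
have hinj : injective h by move=> x y /inj; rewrite in_set0; apply.
have ex_pre a : exists x, h x == a by have [x <-] := surj a; exists x.
pose g a := xchoose (ex_pre a).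
have hK : cancel g h by move=> a; apply/eqP/(xchooseP (ex_pre a)).
exists h; split; first by exists g => // x; apply: hinj; rewrite hK.
move=> x y; apply/idP/idP; last exact: hom.
by move=> /cov [x' [y' [/hinj -> /hinj ->]]].
Qed.

Lemma collapse_fibre_independent h (T : {set 'I_(dsize H)}) t : loopless H -> collapse h T ->
  forall x y, x \in [set x | h x == t] -> y \in [set x | h x == t] -> darc X x y = false.
Proof.
move=> loopH [hom _ _ _] x y; rewrite !inE => /eqP hx /eqP hy.
by apply/negbTE/negP => /hom; rewrite hx hy loopH.
Qed.

Lemma collapse_identify h (T : {set 'I_(dsize H)}) t (X' : digraph) : t \in T -> collapse h T ->
  identify_result [set x | h x == t] X' ->
  exists h' : 'I_(dsize X') -> 'I_(dsize H), collapse h' (T :\ t).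
Proof.
move=> tT [hom cov surj inj] [_ [_ [phi [phi_inj [phi_fib [phi_sep [phi_surj phi_arc]]]]]]].
have ex_pre a : exists x, phi x == a by have [x <-] := phi_surj a; exists x.
pose h' a := h (xchoose (ex_pre a)).
have h'phi x : h' (phi x) = h x.
  have /eqP := xchooseP (ex_pre (phi x)); set x' := xchoose _ => e.
  case: (boolP (x \in [set x | h x == t])) => xt.
    have x't : x' \in [set x | h x == t].
      by apply: contraT => x'nt; case: (phi_sep _ _ xt x'nt (esym e)).
    by move: xt x't; rewrite !inE /h' -/x' => /eqP -> /eqP ->.
  have x't : x' \notin [set x | h x == t].
    by apply/negP => x't; case: (phi_sep _ _ x't xt e).
  by rewrite /h' -/x' (phi_inj _ _ x't xt e).
exists h'; split.
- by move=> a b /phi_arc [x [y [<- <- /hom]]]; rewrite !h'phi.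
- move=> a b /cov [x [y [<- <- xy]]]; exists (phi x), (phi y).
  by rewrite !h'phi; split=> //; apply/phi_arc; exists x, y.
- by move=> a; have [x <-] := surj a; exists (phi x); rewrite h'phi.
- move=> a b; have [x <-] := phi_surj a; have [y <-] := phi_surj b; rewrite !h'phi => hxy.
  rewrite in_setD1 negb_and negbK => /orP [/eqP hxt|hxT].
    by apply: phi_fib; rewrite inE -?hxy hxt.
  by rewrite (inj _ _ hxy hxT).
Qed.

Lemma collapse_comp (D : digraph) (f : 'I_(dsize D) -> 'I_(dsize X)) h T :
  bijective f -> (forall x y, darc X (f x) (f y) = darc D x y) ->
  collapse h T -> collapse (h \o f) T.
Proof.
move=> [g fK gK] farc [hom cov surj inj]; split.
- by move=> x y; rewrite -farc => /hom.
- move=> a b /cov [x [y [<- <- xy]]]; exists (g x), (g y).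
  by rewrite /= !gK -farc !gK.
- by move=> a; have [x <-] := surj a; exists (g x); rewrite /= gK.
- by move=> x y /inj hxy /hxy /(can_inj fK).
Qed.

End Collapse.

Section Join.
Variables (D1 D2 : digraph) (u1 v1 : 'I_(dsize D1)) (v2 u2 : 'I_(dsize D2)).

(* The vertex [inr v2] is dropped: [join_inr] sends [v2] to the image of [v1]. *)
Local Notation U := ('I_(dsize D1) + 'I_(dsize D2))%type.
Local Notation V := {z : U | z != inr v2}.

Definition join_inl (x : 'I_(dsize D1)) : 'I_#|{: V}| :=
  enum_rank (exist (fun z : U => z != inr v2) (inl x) isT).

Definition join_inr (y : 'I_(dsize D2)) : 'I_#|{: V}| :=
  if (insub (inr y : U) : option V) is Some z then enum_rank z else join_inl v1.

Definition hajos_join : digraph := @Digraph #|{: V}| (fun a b =>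
  [|| (a == join_inl u1) && (b == join_inr u2),
      [exists x, exists y,
         [&& join_inl x == a, join_inl y == b, darc D1 x y & (x, y) != (u1, v1)]] |
      [exists x, exists y,
         [&& join_inr x == a, join_inr y == b, darc D2 x y & (x, y) != (v2, u2)]]]).

Definition join_map (T : Type) (g1 : 'I_(dsize D1) -> T) (g2 : 'I_(dsize D2) -> T)
    (a : 'I_#|{: V}|) :=
  match val (enum_val a) with inl x => g1 x | inr y => g2 y end.

Lemma join_inr_v2 : join_inr v2 = join_inl v1.
Proof. by rewrite /join_inr insubF //= eqxx. Qed.

Lemma join_inr_val y (ne : y != v2) :
  join_inr y = enum_rank (exist (fun z : U => z != inr v2) (inr y) ne).
Proof. by rewrite /join_inr insubT //= => ne'; congr enum_rank; apply: val_inj. Qed.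

Lemma join_inl_inj : injective join_inl.
Proof. by move=> x y /enum_rank_inj /(congr1 val) []. Qed.

Lemma join_inr_inj : injective join_inr.
Proof.
move=> x y; have [->|nx] := eqVneq x v2; have [->|ny] := eqVneq y v2 => //.
- by rewrite join_inr_v2 join_inr_val => /enum_rank_inj /(congr1 val).
- by rewrite join_inr_v2 join_inr_val => /enum_rank_inj /(congr1 val).
- by rewrite !join_inr_val => /enum_rank_inj /(congr1 val) [].
Qed.

Lemma join_inl_inr x y : join_inl x = join_inr y <-> x = v1 /\ y = v2.
Proof.
split; last by move=> [-> ->]; rewrite join_inr_v2.
have [->|ny] := eqVneq y v2; first by rewrite join_inr_v2 => /join_inl_inj.
by rewrite join_inr_val => /enum_rank_inj /(congr1 val).
Qed.

Lemma join_cover a : (exists x, join_inl x = a) \/ (exists y, join_inr y = a).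
Proof.
case: (enum_val a) (enum_valK a) => -[x|y] ne <-.
  by left; exists x; congr enum_rank; apply: val_inj.
by right; exists y; rewrite join_inr_val; congr enum_rank; apply: val_inj.
Qed.

Lemma darc_hajos_join a b : darc hajos_join a b <->
  [\/ a = join_inl u1 /\ b = join_inr u2,
      exists x y, [/\ join_inl x = a, join_inl y = b, darc D1 x y & (x, y) <> (u1, v1)]
    | exists x y, [/\ join_inr x = a, join_inr y = b, darc D2 x y & (x, y) <> (v2, u2)]].
Proof.
split.
  case/or3P => [/andP [/eqP -> /eqP ->]|/existsP [x /existsP [y /and4P [/eqP <- /eqP <- xy ne]]]
              |/existsP [x /existsP [y /and4P [/eqP <- /eqP <- xy ne]]]].
  - by constructor 1.
  - by constructor 2; exists x, y; split=> //; apply/eqP.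
  - by constructor 3; exists x, y; split=> //; apply/eqP.
case=> [[-> ->]|[x [y [<- <- xy /eqP ne]]]|[x [y [<- <- xy /eqP ne]]]]; apply/or3P.
- by constructor 1; rewrite !eqxx.
- by constructor 2; apply/existsP; exists x; apply/existsP; exists y; rewrite !eqxx xy ne.
- by constructor 3; apply/existsP; exists x; apply/existsP; exists y; rewrite !eqxx xy ne.
Qed.

Lemma hajos_join_result_join :
  darc D1 u1 v1 -> darc D2 v2 u2 -> hajos_join_result u1 v1 v2 u2 hajos_join.
Proof.
move=> a1 a2; do 2 split=> //; exists join_inl, join_inr.
split; first exact: join_inl_inj.
split; first exact: join_inr_inj.
split; first exact: join_inl_inr.
by split; [exact: join_cover | exact: darc_hajos_join].
Qed.

Lemma join_map_inl T g1 g2 x : @join_map T g1 g2 (join_inl x) = g1 x.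
Proof. by rewrite /join_map /join_inl enum_rankK. Qed.

Lemma join_map_inr T g1 g2 y : g1 v1 = g2 v2 -> @join_map T g1 g2 (join_inr y) = g2 y.
Proof.
move=> g12; have [->|ny] := eqVneq y v2; first by rewrite join_inr_v2 join_map_inl.
by rewrite join_inr_val /join_map enum_rankK.
Qed.

Lemma join_map_collapse (H : digraph) (g1 : 'I_(dsize D1) -> 'I_(dsize H))
    (g2 : 'I_(dsize D2) -> 'I_(dsize H)) (T : {set 'I_(dsize H)}) :
  g1 v1 = g2 v2 ->
  (forall x y, darc D1 x y -> (x, y) <> (u1, v1) -> darc H (g1 x) (g1 y)) ->
  (forall x y, darc D2 x y -> (x, y) <> (v2, u2) -> darc H (g2 x) (g2 y)) ->
  darc H (g1 u1) (g2 u2) ->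
  (forall a b, darc H a b -> [\/ a = g1 u1 /\ b = g2 u2,
      exists x y, [/\ g1 x = a, g1 y = b, darc D1 x y & (x, y) <> (u1, v1)]
    | exists x y, [/\ g2 x = a, g2 y = b, darc D2 x y & (x, y) <> (v2, u2)]]) ->
  (forall a, (exists x, g1 x = a) \/ (exists y, g2 y = a)) ->
  (forall a, a \notin T -> [/\ forall x x', g1 x = a -> g1 x' = a -> x = x',
       forall y y', g2 y = a -> g2 y' = a -> y = y'
     & forall x y, g1 x = a -> g2 y = a -> x = v1 /\ y = v2]) ->
  @collapse hajos_join H (join_map g1 g2) T.
Proof.
move=> g12 hom1 hom2 cross cov surj fib.
have h1 := join_map_inl g1 g2; have h2 y := join_map_inr y g12.
split.
- move=> a b /darc_hajos_join [[-> ->]|[x [y [<- <- xy ne]]]|[x [y [<- <- xy ne]]]].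
  + by rewrite h1 h2.
  + by rewrite !h1; apply: hom1.
  + by rewrite !h2; apply: hom2.
- move=> a b /cov [[-> ->]|[x [y [<- <- xy ne]]]|[x [y [<- <- xy ne]]]].
  + exists (join_inl u1), (join_inr u2); rewrite h1 h2; split=> //.
    by apply/darc_hajos_join; constructor 1.
  + exists (join_inl x), (join_inl y); rewrite !h1; split=> //.
    by apply/darc_hajos_join; constructor 2; exists x, y.
  + exists (join_inr x), (join_inr y); rewrite !h2; split=> //.
    by apply/darc_hajos_join; constructor 3; exists x, y.
- by move=> a; case: (surj a) => [[x <-]|[y <-]]; [exists (join_inl x) | exists (join_inr y)].
- move=> a b; case: (join_cover a) => [[x1 <-]|[y1 <-]]; case: (join_cover b) => [[x2 <-]|[y2 <-]];
    rewrite ?h1 ?h2 => e /fib [F1 F2 F12].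
  + by rewrite (F1 _ _ erefl (esym e)).
  + by have [-> ->] := F12 _ _ erefl (esym e); rewrite join_inr_v2.
  + by have [-> ->] := F12 _ _ (esym e) erefl; rewrite join_inr_v2.
  + by rewrite (F2 _ _ erefl (esym e)).
Qed.

End Join.

Lemma hajos_join_result_diso (D1 D2 A1 A2 J : digraph)
    (a1 b1 : 'I_(dsize A1)) (b2 a2 : 'I_(dsize A2))
    (f1 : 'I_(dsize D1) -> 'I_(dsize A1)) (f2 : 'I_(dsize D2) -> 'I_(dsize A2)) g1 g2 :
  cancel f1 g1 -> cancel g1 f1 -> (forall x y, darc A1 (f1 x) (f1 y) = darc D1 x y) ->
  cancel f2 g2 -> cancel g2 f2 -> (forall x y, darc A2 (f2 x) (f2 y) = darc D2 x y) ->
  hajos_join_result a1 b1 b2 a2 J -> hajos_join_result (g1 a1) (g1 b1) (g2 b2) (g2 a2) J.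
Proof.
move=> f1K g1K f1a f2K g2K f2a [a1b1 [b2a2 [phi1 [phi2 [i1 [i2 [meet [cov arcs]]]]]]]].
have f1_inj := can_inj f1K; have f2_inj := can_inj f2K.
split; first by rewrite -f1a !g1K.
split; first by rewrite -f2a !g2K.
exists (phi1 \o f1), (phi2 \o f2).
split; first exact: inj_comp.
split; first exact: inj_comp.
split.
  move=> x y /=; rewrite meet; split=> [[<- <-]|[-> ->]]; by rewrite ?f1K ?f2K ?g1K ?g2K.
split.
  by move=> z; case: (cov z) => [[x <-]|[y <-]]; [left; exists (g1 x) | right; exists (g2 y)];
    rewrite /= ?g1K ?g2K.
move=> a b; rewrite arcs; split.
- case=> [[-> ->]|[x [y [<- <- xy ne]]]|[x [y [<- <- xy ne]]]].
  + by constructor 1; rewrite /= !g1K !g2K.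
  + constructor 2; exists (g1 x), (g1 y); rewrite /= !g1K -f1a !g1K; split=> //.
    by move=> [ex ey]; apply: ne; rewrite -(g1K x) -(g1K y) ex ey !g1K.
  + constructor 3; exists (g2 x), (g2 y); rewrite /= !g2K -f2a !g2K; split=> //.
    by move=> [ex ey]; apply: ne; rewrite -(g2K x) -(g2K y) ex ey !g2K.
- case=> [[-> ->]|[x [y [<- <- xy ne]]]|[x [y [<- <- xy ne]]]].
  + by constructor 1; rewrite /= !g1K !g2K.
  + constructor 2; exists (f1 x), (f1 y); rewrite f1a; split=> //.
    by move=> [ex ey]; apply: ne; rewrite -(f1K x) -(f1K y) ex ey.
  + constructor 3; exists (f2 x), (f2 y); rewrite f2a; split=> //.
    by move=> [ex ey]; apply: ne; rewrite -(f2K x) -(f2K y) ex ey.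
Qed.

Section Constructions.
Variable r : nat.

Definition available (s : seq digraph) (H : digraph) := exists2 D, List.In D s & diso D H.

Definition reachable (s : seq digraph) (k : nat) (H : digraph) :=
  exists s', [/\ hconstr r s' k, List.incl s s' & available s' H].

Lemma available_incl s s' H : List.incl s s' -> available s H -> available s' H.
Proof. by move=> ss' [D /ss' Ds' DH]; exists D. Qed.

Lemma available_rcons s D : available (rcons s D) D.
Proof. by exists D; [apply: In_rcons_last | apply: diso_refl]. Qed.

Lemma reachable_diso s k H H' : reachable s k H -> diso H H' -> reachable s k H'.
Proof.
move=> [s' [hc inc [D inD DH]]] HH'.
by exists s'; split=> //; exists D => //; apply: diso_trans DH HH'.
Qed.

Lemma reachable_bind s k H k' H' : reachable s k H ->
  (forall s', hconstr r s' k -> List.incl s s' -> available s' H -> reachable s' k' H') ->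
  reachable s k' H'.
Proof.
move=> [s1 [hc1 ss1 av1]] /(_ s1 hc1 ss1 av1) [s2 [hc2 s1s2 av2]].
by exists s2; split=> //; apply: List.incl_tran s1s2.
Qed.

Lemma hconstr_prefix s k D : hconstr r s k -> List.In D s ->
  exists s1 k1, hconstr r (rcons s1 D) k1 /\ k1 <= k.
Proof.
have In_rcons s0 (D0 : digraph) : List.In D (rcons s0 D0) -> List.In D s0 \/ D = D0.
  by rewrite -cats1 => /(@List.in_app_or _ _ _ _) [?|[eD|//]]; [left|right].
move=> hc; elim: hc => [//|s0 k0 D0 hc IH iso|s0 k0 D0 I D' hc IH inD idr
        |s0 k0 D1 D2 u1 v1 v2 u2 D' hc IH in1 in2 jr] /In_rcons [/IH [s1 [k1 [hc1 le1]]]|->].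
- by exists s1, k1.
- by exists s0, k0; split=> //; exact: hc_base hc iso.
- by exists s1, k1; split=> //; apply: leqW.
- by exists s0, k0.+1; split=> //; exact: hc_ident hc inD idr.
- by exists s1, k1; split=> //; apply: leqW.
- by exists s0, k0.+1; split=> //; exact: hc_join hc in1 in2 jr.
Qed.

Lemma reachable_collapse s k X H (h : 'I_(dsize X) -> 'I_(dsize H)) T :
  hconstr r s k -> available s X -> loopless H -> collapse h T -> reachable s (k + #|T|) H.
Proof.
move=> + + loopH; move eqn : #|T| => n.
elim: n s k X h T eqn => [|n IH] s k X h T cardT hc [D inD [f [fbij farc]]] colh;
  have {}colh := collapse_comp fbij farc colh.
  rewrite addn0; exists s; split=> //; exists D => //.
  by move/cards0_eq: cardT colh => ->; apply: collapse_diso.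
have [t tT] : exists t, t \in T by apply/set0Pn; rewrite -card_gt0 cardT.
have [_ _ surj _] := colh; have [x0 hx0] := surj t.
have x0I : x0 \in [set x | (h \o f) x == t] by rewrite inE hx0.
have idr := identify_result_identify x0I (collapse_fibre_independent loopH colh).
have [h' colh'] := collapse_identify tT colh idr.
have cardTt : #|T :\ t| = n by move: cardT; rewrite (cardsD1 t) tT => -[].
have [s' [hc' inc av]] :=
  IH _ _ _ _ _ cardTt (hc_ident hc inD idr) (available_rcons _ _) colh'.
exists s'; split=> //; first by rewrite addnS -addSn.
exact: List.incl_tran (incl_rcons _) inc.
Qed.

Lemma hconstr_join s k A1 A2 (a1 b1 : 'I_(dsize A1)) (b2 a2 : 'I_(dsize A2)) :
  hconstr r s k -> available s A1 -> available s A2 -> darc A1 a1 b1 -> darc A2 b2 a2 ->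
  hconstr r (rcons s (hajos_join a1 b1 b2 a2)) k.+1.
Proof.
move=> hc [D1 in1 [f1 [[g1 f1K g1K] f1a]]] [D2 in2 [f2 [[g2 f2K g2K] f2a]]] a1b1 b2a2.
have jr := hajos_join_result_join a1b1 b2a2.
exact: hc_join hc in1 in2 (hajos_join_result_diso f1K g1K f1a f2K g2K f2a jr).
Qed.

Lemma reachable_join_collapse s k A1 A2 H (a1 b1 : 'I_(dsize A1)) (b2 a2 : 'I_(dsize A2))
    (h : 'I_(dsize (hajos_join a1 b1 b2 a2)) -> 'I_(dsize H)) T :
  hconstr r s k -> available s A1 -> available s A2 -> darc A1 a1 b1 -> darc A2 b2 a2 ->
  loopless H -> collapse h T -> reachable s (k.+1 + #|T|) H.
Proof.
move=> hc av1 av2 a1b1 b2a2 loopH colh.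
have [s' [hc' inc av]] := reachable_collapse (hconstr_join hc av1 av2 a1b1 b2a2)
  (available_rcons _ _) loopH colh.
by exists s'; split=> //; apply: List.incl_tran (incl_rcons _) inc.
Qed.

Lemma hajos_number_le_reachable k B H : reachable [::] k H -> k <= B -> hajos_number_le r H B.
Proof.
move=> [s [hc _ [D inD DH]]] kB; have [s1 [k1 [hc1 le1]]] := hconstr_prefix hc inD.
by exists s1, k1, D; split=> //; apply: leq_trans kB.
Qed.

End Constructions.

(** * Chorded cycles *)

Variant mod_double_spec (L a : nat) : nat -> Type :=
| ModSmall of a < L : mod_double_spec L a a
| ModLarge of L <= a : mod_double_spec L a (a - L).

Lemma mod_doubleP L a : a < 2 * L -> mod_double_spec L a (a %% L).
Proof.
move=> lt; case: (ltnP a L) => [al|la]; first by rewrite modn_small //; constructor.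
have -> : a %% L = a - L by rewrite -{1}(subnK la) modnDr modn_small //; lia.
by constructor.
Qed.

(* Case-splits every innermost [a %% L] for which [lia] proves [a < 2 * L]. *)
Ltac elim_mod :=
  repeat match goal with
  | |- context [?a %% ?L] =>
      lazymatch a with context [_ %% _] => fail | _ => idtac end;
      let Ha := fresh "Ha" in
      (have Ha : a < 2 * L by lia); case: (mod_doubleP Ha); clear Ha; try move=> ?
  end.

Lemma neq_ord n (x y : 'I_n) : (x != y) = (nat_of_ord x != nat_of_ord y).
Proof. by []. Qed.

Definition cycle_rel (N i j : nat) := (j == i.+1 %% N) || (i == j.+1 %% N).

Section ChordedCycle.
Variable m : nat.
Hypothesis m2 : 2 <= m.
Local Notation L := (2 * m).+1.

Definition chorded_rel (ch : pred nat) (mi : rel nat) (i j : nat) :=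
  (cycle_rel L i j && ~~ mi i j) || (ch i && (j == (i + m) %% L)).

Definition chorded ch mi : digraph := @Digraph L (fun i j => chorded_rel ch mi i j).

Definition rotate (t : nat) (i : 'I_L) : 'I_L := Ordinal (ltn_pmod (i + t) (ltn0Sn (2 * m))).

Lemma rotateE t (i : 'I_L) : nat_of_ord (rotate t i) = (i + t) %% L.
Proof. by []. Qed.

Lemma rotate_glue_cycle (a b t1 t2 : nat) : a < L -> b < L -> t1 < L -> t2 < L ->
  ((a + m) %% L + t1) %% L = (b + t2) %% L ->
  cycle_rel L ((a + t1) %% L) (((b + m) %% L + t2) %% L).
Proof. rewrite /cycle_rel => ? ? ? ?; elim_mod; lia. Qed.

Lemma rotate_inj t : t < L -> injective (rotate t).
Proof.
move=> tL x y /(congr1 val) /=; have := ltn_ord x; have := ltn_ord y => ? ? e.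
by apply: ord_inj; move: e; elim_mod; lia.
Qed.

Lemma rotate_surj t : t < L -> forall z, exists x, rotate t x = z.
Proof.
move=> tL z; exists (rotate (L - t) z); apply: ord_inj => /=.
have := ltn_ord z => ?; elim_mod; lia.
Qed.

Lemma rotate_cycle t (x y : 'I_L) : t <= L ->
  cycle_rel L (rotate t x) (rotate t y) = cycle_rel L x y.
Proof.
rewrite /cycle_rel /= => tL; have := ltn_ord x; have := ltn_ord y => ? ?; elim_mod; lia.
Qed.

Lemma rotate_chord t (x y : 'I_L) : t <= L ->
  (nat_of_ord (rotate t y) == (rotate t x + m) %% L) = (nat_of_ord y == (x + m) %% L).
Proof. rewrite /= => tL; have := ltn_ord x; have := ltn_ord y => ? ?; elim_mod; lia. Qed.

Lemma cycle_rel_nchord (x y : 'I_L) : cycle_rel L x y -> (nat_of_ord y == (x + m) %% L) = false.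
Proof. rewrite /cycle_rel; have := ltn_ord x; have := ltn_ord y => ? ?; elim_mod; lia. Qed.

Lemma chorded_loopless ch mi : loopless (chorded ch mi).
Proof. by case=> i /= iL; rewrite /chorded_rel /cycle_rel; elim_mod; lia. Qed.

Definition chord_end (x : 'I_L) : 'I_L := Ordinal (ltn_pmod (x + m) (ltn0Sn (2 * m))).

Lemma rotate_chord_end t (x : 'I_L) : t <= L -> rotate t (chord_end x) = chord_end (rotate t x).
Proof. by move=> tL; apply: ord_inj => /=; have := ltn_ord x => ?; elim_mod; lia. Qed.

Lemma chorded_chord (ch : pred nat) mi (x : 'I_L) : ch x -> darc (chorded ch mi) x (chord_end x).
Proof. by move=> chx; rewrite /= /chorded_rel chx eqxx orbT. Qed.

Lemma rotate_chorded_arc (ch ch' : pred nat) mi' (c : 'I_L) t : t <= L ->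
  (forall x : 'I_L, ch' x -> x != c -> ch (rotate t x)) ->
  forall x y, darc (chorded ch' mi') x y -> (x, y) <> (c, chord_end c) ->
  darc (chorded ch (fun _ _ => false)) (rotate t x) (rotate t y).
Proof.
move=> tL chch' x y /orP [/andP [cxy _]|/andP [chx /eqP ey]] ne.
  by rewrite /= /chorded_rel rotate_cycle // cxy.
have xc : x != c.
  by apply/eqP => xc; apply: ne; congr pair => //; apply: ord_inj; rewrite ey xc.
by rewrite /= /chorded_rel chch' // rotate_chord // ey eqxx orbT.
Qed.

Section ChordedJoin.
Variables (ch1 ch2 ch : pred nat) (mi1 mi2 : rel nat) (a b : 'I_L) (t1 t2 : nat).
Hypotheses (t1L : t1 < L) (t2L : t2 < L) (cha : ch1 a) (chb : ch2 b).
Hypothesis glue : rotate t1 (chord_end a) = rotate t2 b.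
Hypothesis ch1_ch : forall x : 'I_L, ch1 x -> x != a -> ch (rotate t1 x).
Hypothesis ch2_ch : forall y : 'I_L, ch2 y -> y != b -> ch (rotate t2 y).
Hypothesis ch_cover : forall z : 'I_L, ch z ->
  (exists x : 'I_L, [/\ ch1 x, x != a & rotate t1 x = z]) \/
  (exists y : 'I_L, [/\ ch2 y, y != b & rotate t2 y = z]).
Hypothesis mi1_cover : forall x y : 'I_L, cycle_rel L x y -> mi1 x y -> exists x' y' : 'I_L,
  [/\ cycle_rel L x' y', ~~ mi2 x' y', rotate t2 x' = rotate t1 x & rotate t2 y' = rotate t1 y].

Local Notation H := (chorded ch (fun _ _ => false)).
Local Notation A1 := (chorded ch1 mi1).
Local Notation A2 := (chorded ch2 mi2).

Lemma chorded_join_new_arc : darc H (rotate t1 a) (rotate t2 (chord_end b)).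
Proof.
have /(congr1 val) /= := glue; rewrite /= /chorded_rel => e.
by rewrite (@rotate_glue_cycle a b t1 t2) ?ltn_ord.
Qed.

Lemma chorded_join_cover i j : darc H i j -> [\/ i = rotate t1 a /\ j = rotate t2 (chord_end b),
    exists x y, [/\ rotate t1 x = i, rotate t1 y = j, darc A1 x y & (x, y) <> (a, chord_end a)]
  | exists x y, [/\ rotate t2 x = i, rotate t2 y = j, darc A2 x y & (x, y) <> (b, chord_end b)]].
Proof.
have t1L' : t1 <= L by apply: ltnW.
have nchord (x y : 'I_L) : cycle_rel L x y -> (x, y) <> (x, chord_end x).
  by move=> cxy [ey]; move: cxy; rewrite ey => /cycle_rel_nchord; rewrite eqxx.
move=> /orP [/andP [cij _]|/andP [chi /eqP ej]].
  have [x ix] := rotate_surj t1L i; have [y iy] := rotate_surj t1L j.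
  have cxy : cycle_rel L x y by rewrite -(rotate_cycle x y t1L') ix iy.
  case mxy: (mi1 x y).
    have [x' [y' [cxy' nm ex ey]]] := mi1_cover cxy mxy.
    constructor 3; exists x', y'; rewrite ex ey ix iy /= /chorded_rel cxy' nm; split=> //.
    by move=> [ex' ey']; apply: (nchord _ _ cxy'); rewrite ex' ey'.
  constructor 2; exists x, y; rewrite ix iy /= /chorded_rel cxy mxy; split=> //.
  by move=> [ex ey]; apply: (nchord _ _ cxy); rewrite ex ey.
have ji : j = chord_end i by apply: ord_inj.
have [[x [chx xa ex]]|[y [chy yb ey]]] := ch_cover chi.
  constructor 2; exists x, (chord_end x); split=> //.
  - by rewrite ji -ex rotate_chord_end.
  - exact: chorded_chord.
  - by move=> [ex' _]; move: xa; rewrite ex' eqxx.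
constructor 3; exists y, (chord_end y); split=> //.
- by rewrite ji -ey rotate_chord_end // ltnW.
- exact: chorded_chord.
- by move=> [ey' _]; move: yb; rewrite ey' eqxx.
Qed.

(* Join the two copies along the chords a -> a + m and b -> b + m, then identify each vertex
   of the rotated first copy with the vertex of the rotated second copy sitting at the same
   position: the join vertex is already shared, so this takes L - 1 identifications. *)
Lemma reachable_chorded_join r s k : hconstr r s k -> available s A1 -> available s A2 ->
  reachable r s (k + L) H.
Proof.
move=> hc av1 av2.
have := reachable_join_collapse (H := H) (T := [set~ rotate t1 (chord_end a)])
  (h := @join_map A1 A2 b _ (rotate t1) (rotate t2)) hc av1 av2 (chorded_chord mi1 cha)
  (chorded_chord mi2 chb) (@chorded_loopless ch (fun _ _ => false)).
rewrite cardsC1 card_ord addSn -addnS; apply; apply: join_map_collapse.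
- exact: glue.
- exact: rotate_chorded_arc (ltnW t1L) ch1_ch.
- exact: rotate_chorded_arc (ltnW t2L) ch2_ch.
- exact: chorded_join_new_arc.
- exact: chorded_join_cover.
- by move=> z; left; apply: rotate_surj.
- move=> z; rewrite !inE negbK => /eqP ->; split.
  + by move=> x x' /(rotate_inj t1L) -> /(rotate_inj t1L) ->.
  + by move=> y y'; rewrite glue => /(rotate_inj t2L) -> /(rotate_inj t2L) ->.
  + by move=> x y /(rotate_inj t1L) ->; rewrite glue => /(rotate_inj t2L) ->.
Qed.

End ChordedJoin.

End ChordedCycle.

(** * Doubling the length of the cycle *)

Section CyclesJoin.
Variable m : nat.
Hypothesis m2 : 2 <= m.
Local Notation L := (2 * m).+1.
Local Notation M := m.+1.

(* The first copy of D(C_(m+1)) sits on 0, ..., m and the second on 0, m+1, ..., 2m; the join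
   removes the arcs m -> 0 and 0 -> m+1 and adds the arc m -> m+1. *)
Definition join_chords (x : nat) := (x == 0) || (x == m.+1).
Definition join_missing (i j : nat) := (i == m.+1) && (j == m).
Local Notation join_rel := (chorded_rel m join_chords join_missing).

Definition cycle_join := chorded m join_chords join_missing.

Definition second_copy (x : nat) := if x == 0 then 0 else x + m.
Definition second_copy_inv (i : nat) := if i == 0 then 0 else i - m.

Lemma first_copy_arc x y : x < M -> y < M -> cycle_rel M x y ->
  ~~ ((x == m) && (y == 0)) -> join_rel x y.
Proof. rewrite /chorded_rel /cycle_rel /join_chords /join_missing => ? ?; elim_mod; lia. Qed.

Lemma second_copy_arc x y : x < M -> y < M -> cycle_rel M x y ->
  ~~ ((x == 0) && (y == 1)) -> join_rel (second_copy x) (second_copy y).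
Proof.
rewrite /chorded_rel /cycle_rel /join_chords /join_missing /second_copy => ? ?.
by do 2 case: ifP => ?; elim_mod; lia.
Qed.

Lemma join_new_arc : join_rel m (second_copy 1).
Proof.
by rewrite /chorded_rel /cycle_rel /join_chords /join_missing /second_copy /=; elim_mod; lia.
Qed.

Lemma join_arc_first i j : i < M -> j < M -> join_rel i j -> ~~ ((i == m) && (j == m.+1)) ->
  cycle_rel M i j && ~~ ((i == m) && (j == 0)).
Proof. rewrite /chorded_rel /cycle_rel /join_chords /join_missing => ? ?; elim_mod; lia. Qed.

Lemma join_arc_second_range i j : i < L -> j < L -> join_rel i j -> ~~ ((i < M) && (j < M)) ->
  ~~ ((i == m) && (j == m.+1)) -> ((i == 0) || (m < i)) && ((j == 0) || (m < j)).
Proof. rewrite /chorded_rel /cycle_rel /join_chords /join_missing => ? ?; elim_mod; lia. Qed.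

Lemma join_arc_second i j : i < L -> j < L -> join_rel i j -> ~~ ((i < M) && (j < M)) ->
  ~~ ((i == m) && (j == m.+1)) ->
  cycle_rel M (second_copy_inv i) (second_copy_inv j)
  && ~~ ((second_copy_inv i == 0) && (second_copy_inv j == 1)).
Proof.
move=> iL jL w nM nc; have := join_arc_second_range iL jL w nM nc; move: w nM nc.
rewrite /chorded_rel /cycle_rel /join_chords /join_missing /second_copy_inv.
by case: (i =P 0) => [->|_]; case: (j =P 0) => [->|_]; elim_mod; lia.
Qed.

Lemma second_copy_lt x : x < M -> second_copy x < L.
Proof. by rewrite /second_copy; case: ifP => _ ?; lia. Qed.

Lemma second_copy_inv_lt i : i < L -> second_copy_inv i < M.
Proof. by rewrite /second_copy_inv; case: ifP => _ ?; lia. Qed.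

Lemma second_copyK i : (i == 0) || (m < i) -> second_copy (second_copy_inv i) = i.
Proof.
by rewrite /second_copy_inv /second_copy; case: (i =P 0) => [->|_] //= ?; case: ifP => ?; lia.
Qed.

Lemma second_copy_inj x y : x < M -> y < M -> second_copy x = second_copy y -> x = y.
Proof. by rewrite /second_copy; case: ifP => ?; case: ifP => ? ? ? ?; lia. Qed.

Lemma second_copy_first x y : x < M -> y < M -> x = second_copy y -> x = 0 /\ y = 0.
Proof. by rewrite /second_copy; case: ifP => ? ? ? ?; lia. Qed.

Definition first_copy_map (x : 'I_M) : 'I_L := inord x.
Definition second_copy_map (x : 'I_M) : 'I_L := inord (second_copy x).

Lemma first_copy_mapE x : nat_of_ord (first_copy_map x) = x.
Proof. by rewrite inordK //; have := ltn_ord x; lia. Qed.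

Lemma second_copy_mapE x : nat_of_ord (second_copy_map x) = second_copy x.
Proof. by rewrite inordK // ltnS -ltnS; apply: second_copy_lt. Qed.

Lemma inord1E : nat_of_ord (inord 1 : 'I_M) = 1.
Proof. by rewrite inordK //; lia. Qed.

Lemma cycle_join_cover (a b : 'I_L) : darc cycle_join a b ->
  [\/ a = first_copy_map ord_max /\ b = second_copy_map (inord 1),
    exists x y, [/\ first_copy_map x = a, first_copy_map y = b, darc (DC M) x y
                  & (x, y) <> (ord_max, ord0)]
  | exists x y, [/\ second_copy_map x = a, second_copy_map y = b, darc (DC M) x y
                  & (x, y) <> (ord0, inord 1)]].
Proof.
move=> ab; change (is_true (join_rel a b)) in ab.
case: (boolP ((nat_of_ord a == m) && (nat_of_ord b == m.+1))) => [/andP [/eqP am /eqP bm]|nc].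
  constructor 1; split; apply: ord_inj; by rewrite ?first_copy_mapE ?second_copy_mapE ?inord1E.
case: (boolP ((nat_of_ord a < M) && (nat_of_ord b < M))) => [/andP [aM bM]|nM].
  have /andP [d nd] := join_arc_first aM bM ab nc.
  constructor 2; exists (inord a), (inord b); split.
  + by apply: ord_inj; rewrite first_copy_mapE inordK.
  + by apply: ord_inj; rewrite first_copy_mapE inordK.
  + by rewrite /= !inordK.
  + by move=> [ea eb]; move: nd; rewrite -(inordK aM) -(inordK bM) ea eb /= eqxx.
have /andP [a0 b0] := join_arc_second_range (ltn_ord a) (ltn_ord b) ab nM nc.
have /andP [d nd] := join_arc_second (ltn_ord a) (ltn_ord b) ab nM nc.
have ia := second_copy_inv_lt (ltn_ord a); have ib := second_copy_inv_lt (ltn_ord b).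
constructor 3; exists (inord (second_copy_inv a)), (inord (second_copy_inv b)); split.
+ by apply: ord_inj; rewrite second_copy_mapE inordK // second_copyK.
+ by apply: ord_inj; rewrite second_copy_mapE inordK // second_copyK.
+ by rewrite /= !inordK.
+ by move=> [ea eb]; move: nd; rewrite -(inordK ia) -(inordK ib) ea eb /= inord1E eqxx.
Qed.

Lemma cycle_join_surj (z : 'I_L) :
  (exists x, first_copy_map x = z) \/ (exists y, second_copy_map y = z).
Proof.
case: z => z zL; have zL' : z < L := zL; case: (ltnP z M) => zM.
  by left; exists (inord z); apply: ord_inj; rewrite first_copy_mapE /= inordK.
have zm : z - m < M by lia.
right; exists (inord (z - m)); apply: ord_inj; rewrite second_copy_mapE /= inordK //.
by rewrite /second_copy; case: ifP => ?; lia.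
Qed.

Lemma cycle_join_fibres (z : 'I_L) :
  [/\ forall x x', first_copy_map x = z -> first_copy_map x' = z -> x = x',
      forall y y', second_copy_map y = z -> second_copy_map y' = z -> y = y'
    & forall x y, first_copy_map x = z -> second_copy_map y = z -> x = ord0 /\ y = ord0].
Proof.
split.
- by move=> x x' <- /(congr1 (@nat_of_ord _)); rewrite !first_copy_mapE => e; apply: val_inj.
- move=> y y' <- /(congr1 (@nat_of_ord _)); rewrite !second_copy_mapE => e; apply: val_inj.
  exact: second_copy_inj (ltn_ord _) (ltn_ord _) (esym e).
- move=> x y <- /(congr1 (@nat_of_ord _)); rewrite first_copy_mapE second_copy_mapE => e.
  have [x0 y0] := second_copy_first (ltn_ord x) (ltn_ord y) (esym e).
  by split; apply: val_inj.
Qed.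

Lemma reachable_cycles_join r s k :
  hconstr r s k -> available s (DC M) -> reachable r s k.+1 cycle_join.
Proof.
move=> hc av.
have a1 : darc (DC M) ord_max ord0 by rewrite /= modnn eqxx.
have a2 : darc (DC M) ord0 (inord 1) by rewrite /= inord1E modn_small //; lia.
have := reachable_join_collapse (H := cycle_join) (T := set0)
  (h := @join_map (DC M) (DC M) ord0 _ first_copy_map second_copy_map)
  hc av av a1 a2 (@chorded_loopless m m2 join_chords join_missing).
rewrite cards0 addn0; apply; apply: join_map_collapse.
- by apply: ord_inj; rewrite first_copy_mapE ?second_copy_mapE.
- move=> x y xy ne; rewrite /= !first_copy_mapE; apply: first_copy_arc => //.
  by apply/negP => /andP [/eqP xm /eqP y0]; apply: ne; congr pair; apply: val_inj.
- move=> x y xy ne; rewrite /= !second_copy_mapE; apply: second_copy_arc => //.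
  apply/negP => /andP [/eqP x0 /eqP y1]; apply: ne.
  by congr pair; apply: val_inj; rewrite //= inord1E.
- by rewrite /= first_copy_mapE second_copy_mapE inord1E; apply: join_new_arc.
- exact: cycle_join_cover.
- exact: cycle_join_surj.
- by move=> z _; apply: cycle_join_fibres.
Qed.

End CyclesJoin.

Section Rounds.
Variable m : nat.
Hypothesis m2 : 2 <= m.
Local Notation L := (2 * m).+1.

Definition two_chords (e : nat) := chorded m (fun x => (x == 0) || (x == e)) (fun _ _ => false).
Definition one_chord := chorded m (fun x => x == 0) (fun _ _ => false).

Lemma reachable_two_chords_from_join r s k :
  hconstr r s k -> available s (cycle_join m) ->
  reachable r s (k + L) (two_chords (m - 1)).
Proof.
move=> hc av.
have mL : m < L by lia.
have m1L : m.+1 < L by lia.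
have m2L : m.+2 < L by lia.
apply: (reachable_chorded_join m2 (ch1 := join_chords m) (mi1 := join_missing m)
  (ch2 := join_chords m) (mi2 := join_missing m) (a := inord 0) (b := inord m.+1) (t1 := m)
  (t2 := m - 1)) => //.
- lia.
- by rewrite inordK.
- by rewrite inordK // /join_chords eqxx orbT.
- by apply: ord_inj; rewrite !rotateE !inordK //; elim_mod; lia.
- move=> x; rewrite /join_chords neq_ord inordK // rotateE => + ?; have := ltn_ord x => xl.
  by elim_mod; lia.
- move=> y; rewrite /join_chords neq_ord inordK // rotateE => + ?; have := ltn_ord y => yl.
  by elim_mod; lia.
- move=> z; have zl := ltn_ord z; case/orP => /eqP ez.
    left; exists (inord m.+1); split.
    + by rewrite inordK // /join_chords eqxx orbT.
    + by rewrite neq_ord !inordK.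
    + by apply: ord_inj; rewrite rotateE inordK // ez; elim_mod; lia.
  right; exists (inord 0); split.
  + by rewrite inordK.
  + by rewrite neq_ord !inordK.
  + by apply: ord_inj; rewrite rotateE inordK // ez; elim_mod; lia.
- move=> x y _; rewrite /join_missing => /andP [/eqP ex /eqP ey].
  exists (inord m.+2), (inord m.+1); split.
  + by rewrite !inordK // /cycle_rel; elim_mod; lia.
  + by rewrite !inordK //; apply/negP => /andP [/eqP ? _]; lia.
  + by apply: ord_inj; rewrite !rotateE !inordK // ex; elim_mod; lia.
  + by apply: ord_inj; rewrite !rotateE !inordK // ey; elim_mod; lia.
Qed.

Lemma reachable_two_chords_double r s k e : 0 < e < m ->
  hconstr r s k -> available s (two_chords e) ->
  reachable r s (k + L) (two_chords ((2 * e + m) %% L)).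
Proof.
move=> /andP [e0 em] hc av.
have eL : e < L by lia.
apply: (reachable_chorded_join m2 (ch1 := fun x => (x == 0) || (x == e)) (mi1 := fun _ _ => false)
  (ch2 := fun x => (x == 0) || (x == e)) (mi2 := fun _ _ => false) (a := inord e) (b := inord 0)
  (t1 := 0) (t2 := e + m)) => //.
- lia.
- by rewrite inordK // eqxx orbT.
- by rewrite inordK.
- by apply: ord_inj; rewrite !rotateE !inordK //; elim_mod; lia.
- move=> x; rewrite neq_ord inordK // rotateE => + ?; have := ltn_ord x => xl.
  by elim_mod; lia.
- move=> y; rewrite neq_ord inordK // rotateE => + ?; have := ltn_ord y => yl.
  by elim_mod; lia.
- move=> z; have zl := ltn_ord z; case/orP => /eqP ez.
    left; exists (inord 0); split.
    + by rewrite inordK.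
    + by rewrite neq_ord !inordK //; lia.
    + by apply: ord_inj; rewrite rotateE inordK // ez; elim_mod; lia.
  right; exists (inord e); split.
  + by rewrite inordK // eqxx orbT.
  + by rewrite neq_ord !inordK //; lia.
  + by apply: ord_inj; rewrite rotateE inordK // ez; elim_mod; lia.
Qed.

Lemma reachable_one_chord r s k : hconstr r s k -> available s (two_chords 1) ->
  available s (cycle_join m) -> reachable r s (k + L) one_chord.
Proof.
move=> hc av1 av2.
have m1L : m.+1 < L by lia.
have o1 : nat_of_ord (inord 1 : 'I_L) = 1 by rewrite inordK //; lia.
apply: (reachable_chorded_join m2 (ch1 := fun x => (x == 0) || (x == 1)) (mi1 := fun _ _ => false)
  (ch2 := join_chords m) (mi2 := join_missing m) (a := inord 1) (b := inord m.+1) (t1 := 0)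
  (t2 := 0)) => //.
- by rewrite o1.
- by rewrite inordK // /join_chords eqxx orbT.
- by apply: ord_inj; rewrite !rotateE o1 !inordK //; elim_mod; lia.
- move=> x; rewrite neq_ord o1 rotateE => + ?; have := ltn_ord x => xl.
  by elim_mod; lia.
- move=> y; rewrite /join_chords neq_ord inordK // rotateE => + ?; have := ltn_ord y => yl.
  by elim_mod; lia.
- move=> z; have zl := ltn_ord z; move=> /eqP ez.
  left; exists (inord 0); split.
  + by rewrite inordK.
  + by rewrite neq_ord o1 inordK.
  + by apply: ord_inj; rewrite rotateE inordK // ez; elim_mod; lia.
Qed.

Lemma reachable_no_chord r s k : hconstr r s k -> available s one_chord ->
  reachable r s (k + L) (chorded m pred0 (fun _ _ => false)).
Proof.
move=> hc av.
apply: (reachable_chorded_join m2 (ch1 := fun x => x == 0) (mi1 := fun _ _ => false)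
  (ch2 := fun x => x == 0) (mi2 := fun _ _ => false) (a := inord 0) (b := inord 0) (t1 := 0)
  (t2 := m)) => //.
- lia.
- by rewrite inordK.
- by rewrite inordK.
- by apply: ord_inj; rewrite !rotateE !inordK //; elim_mod; lia.
- by move=> x /eqP x0; rewrite neq_ord inordK // x0.
- by move=> x /eqP x0; rewrite neq_ord inordK // x0.
Qed.

Lemma chorded_pred0_diso : diso (chorded m pred0 (fun _ _ => false)) (DC L).
Proof. by exists id; split; [exists id | move=> x y; rewrite /= /chorded_rel andbT orbF]. Qed.

End Rounds.

Definition level_cost n := 1 + (n + 2) * (2 ^ n.+1).+1.

Lemma reachable_two_chords_iter r s k n : 1 <= n -> hconstr r s k ->
  available s (two_chords (2 ^ n) (2 ^ n - 1)) -> forall j, 1 <= j <= n ->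
  reachable r s (k + (j - 1) * (2 * 2 ^ n).+1) (two_chords (2 ^ n) (2 ^ n + 1 - 2 ^ j)).
Proof.
move=> n1 hc av; set m := 2 ^ n.
have m2 : 2 <= m by rewrite /m -{1}(expn1 2) leq_exp2l.
elim=> [|j IH] /andP [j1 jn] //; have [->|jp] := posnP j.
  exists s; split=> //; first by rewrite subnn mul0n addn0.
  by have -> : m + 1 - 2 ^ 1 = m - 1 by lia.
have Pj : 2 <= 2 ^ j by rewrite -{1}(expn1 2) leq_exp2l.
have Pj1 : 2 ^ j.+1 <= m by rewrite /m leq_exp2l.
have ePj : 2 ^ j.+1 = 2 * 2 ^ j by rewrite expnS.
have e0 : 0 < m + 1 - 2 ^ j < m by lia.
have -> : m + 1 - 2 ^ j.+1 = (2 * (m + 1 - 2 ^ j) + m) %% (2 * m).+1.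
  have -> : 2 * (m + 1 - 2 ^ j) + m = (m + 1 - 2 ^ j.+1) + (2 * m).+1 by lia.
  by rewrite modnDr modn_small //; lia.
apply: (reachable_bind (IH _)) => [|s' hc' _ av']; first by rewrite jp ltnW.
have -> : k + (j.+1 - 1) * (2 * m).+1 = k + (j - 1) * (2 * m).+1 + (2 * m).+1.
  by rewrite subn1 /=; nia.
exact: (reachable_two_chords_double m2 e0 hc' av').
Qed.

Lemma reachable_next_level r s k n : 1 <= n -> hconstr r s k -> available s (DC (2 ^ n).+1) ->
  reachable r s (k + level_cost n) (DC (2 ^ n.+1).+1).
Proof.
move=> n1 hc av; set m := 2 ^ n.
have m2 : 2 <= m by rewrite /m -{1}(expn1 2) leq_exp2l.
have -> : 2 ^ n.+1 = 2 * m by rewrite expnS.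
have -> : k + level_cost n = k.+1 + (2 * m).+1 + (n - 1) * (2 * m).+1 + (2 * m).+1 + (2 * m).+1.
  by rewrite /level_cost expnS -/m; move: (2 * m).+1 => L'; nia.
apply: (reachable_bind (reachable_cycles_join m2 hc av)) => s1 hc1 _ avJ.
apply: (reachable_bind (reachable_two_chords_from_join m2 hc1 avJ)) => s2 hc2 inc2 av2.
apply: (reachable_bind (reachable_two_chords_iter n1 hc2 av2 (j := n) _)) => [|s3 hc3 inc3 av3].
  by rewrite n1 leqnn.
have e1 : m + 1 - 2 ^ n = 1 by rewrite /m; lia.
rewrite e1 in av3.
have avJ3 := available_incl (List.incl_tran inc2 inc3) avJ.
apply: (reachable_bind (reachable_one_chord m2 hc3 av3 avJ3)) => s4 hc4 _ av4.
exact: reachable_diso (reachable_no_chord m2 hc4 av4) (chorded_pred0_diso m).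
Qed.

Definition hajos_bound n := n * (2 ^ (n + 2) + n + 5) %/ 2 - 7.

Lemma hajos_bound_step n : 1 <= n -> hajos_bound n.+1 = hajos_bound n + level_cost n.
Proof.
move=> n1; rewrite /hajos_bound /level_cost.
have -> : 2 ^ (n.+1 + 2) = 8 * 2 ^ n by rewrite !expnD expnS; lia.
have -> : 2 ^ (n + 2) = 4 * 2 ^ n by rewrite expnD; lia.
rewrite expnS.
have : 2 <= 2 ^ n by rewrite -{1}(expn1 2) leq_exp2l.
move: (2 ^ n) => P P2.
have /divnK : 2 %| n * (n + 5) by rewrite dvdn2 oddM oddD /=; case: (odd n).
move: (n * (n + 5) %/ 2) => Q eQ.
have -> : n * (4 * P + n + 5) = 2 * (2 * (n * P) + Q) by nia.
have -> : n.+1 * (8 * P + n.+1 + 5) = 2 * (4 * (n * P) + 4 * P + Q + n + 3) by nia.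
rewrite !mulKn //.
have Q3 : 3 <= Q by nia.
have nP : 2 <= n * P by nia.
have -> : (n + 2) * (2 * P).+1 = 2 * (n * P) + 4 * P + n + 2 by nia.
lia.
Qed.

Lemma hajos_bound_numer_ge n : 1 <= n -> 14 <= n * (2 ^ (n + 2) + n + 5).
Proof.
move=> n1; have : 2 ^ 3 <= 2 ^ (n + 2) by rewrite leq_exp2l //; lia.
by move: (2 ^ (n + 2)) => P ?; nia.
Qed.

Lemma DC3_DK3 : diso (DC 3) (DK 3).
Proof. by exists id; split; [exists id | move=> [[|[|[|x]]] hx] [[|[|[|y]]] hy]]. Qed.

Lemma reachable_cycle_pow2 n : 1 <= n -> reachable 3 [::] (hajos_bound n) (DC (2 ^ n).+1).
Proof.
elim: n => [//|n IH] _; have [->|n1] := posnP n.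
  exists [:: DC 3]; split=> //; first exact: (hc_base (s := [::]) (hc_nil 3) DC3_DK3).
  exact: available_rcons [::] (DC 3).
rewrite hajos_bound_step //; apply: (reachable_bind (IH n1)) => s hc _ av.
exact: reachable_next_level n1 hc av.
Qed.

(** * Odd cycles of intermediate length *)

Section FoldPath.
Variables (q j : nat).
Hypothesis q2 : 2 <= q.
Hypothesis j1 : 1 <= j.
Local Notation K := (2 * q).+1.
Local Notation L := (2 * q + 2 * j).+1.

(* Wraps the path [0, 1, ..., 2 j] of D(C_L) onto the edge [0 -- 1] of D(C_K). *)
Definition fold_path (i : nat) := if i <= 2 * j then i %% 2 else i - 2 * j.

Definition lift_arc (a b : nat) :=
  if a == 0 then 0 else if b == 0 then (if a == 1 then 1 else L.-1) else a + 2 * j.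

Ltac split_mod2 i := move: (divn_eq i 2) (@ltn_pmod i 2 isT); move: (i %/ 2) (i %% 2) => ? ? ? ?.

Lemma fold_path_arc i i' : i < L -> i' < L -> cycle_rel L i i' ->
  cycle_rel K (fold_path i) (fold_path i').
Proof.
rewrite /cycle_rel /fold_path => ? ?; split_mod2 i; split_mod2 i'.
by do 2 case: ifP => ?; elim_mod; lia.
Qed.

Lemma lift_arcP a b : a < K -> b < K -> cycle_rel K a b ->
  [&& lift_arc a b < L, lift_arc b a < L, fold_path (lift_arc a b) == a,
      fold_path (lift_arc b a) == b & cycle_rel L (lift_arc a b) (lift_arc b a)].
Proof.
rewrite /cycle_rel /fold_path /lift_arc => ? ?.
case: (a =P 0) => [->|?]; case: (b =P 0) => [->|?]; rewrite ?eqxx //=.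
all: try case: (a =P 1) => [->|?]; try case: (b =P 1) => [->|?]; rewrite ?eqxx //=.
all: rewrite ?mod0n; elim_mod.
all: try (do ?case: ifP => ?); elim_mod; lia.
Qed.

Lemma fold_path_surj z : z < K ->
  (if z < 2 then z else z + 2 * j) < L /\ fold_path (if z < 2 then z else z + 2 * j) = z.
Proof. by rewrite /fold_path => ?; case: ifP => ?; case: ifP => ?; rewrite ?modn_small //; lia. Qed.

Lemma fold_path_inj i i' : i < L -> i' < L ->
  fold_path i = fold_path i' -> 2 <= fold_path i -> i = i'.
Proof. by rewrite /fold_path => ? ?; split_mod2 i; split_mod2 i'; do 2 case: ifP => ?; lia. Qed.

Lemma fold_path_lt i : i < L -> fold_path i < K.
Proof. by rewrite /fold_path => ?; split_mod2 i; case: ifP => ?; lia. Qed.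

Lemma reachable_fold_path r s k :
  hconstr r s k -> available s (DC L) -> reachable r s (k + 2) (DC K).
Proof.
move=> hc av.
pose h (x : 'I_L) : 'I_K := inord (fold_path x).
have hE x : nat_of_ord (h x) = fold_path x by rewrite inordK // ltnS -ltnS fold_path_lt.
have o0 : nat_of_ord (inord 0 : 'I_K) = 0 by rewrite inordK.
have o1 : nat_of_ord (inord 1 : 'I_K) = 1 by rewrite inordK //; lia.
pose T : {set 'I_K} := [set inord 0; inord 1].
have cardT : #|T| = 2 by rewrite cards2 neq_ord o0 o1.
have loopK : loopless (DC K) by case=> a /= aK; rewrite /cycle_rel; elim_mod; lia.
rewrite -[in k + 2]cardT; apply: (reachable_collapse (X := DC L) (H := DC K) (h := h) hc av loopK).
split.
- move=> x y xy; change (is_true (cycle_rel K (h x) (h y))); rewrite !hE.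
  exact: fold_path_arc (ltn_ord x) (ltn_ord y) xy.
- move=> a b ab; have /and5P [l1 l2 e1 e2 d] := lift_arcP (ltn_ord a) (ltn_ord b) ab.
  exists (inord (lift_arc a b)), (inord (lift_arc b a)); split.
  + by apply: ord_inj; rewrite hE inordK // (eqP e1).
  + by apply: ord_inj; rewrite hE inordK // (eqP e2).
  + by rewrite /= !inordK.
- move=> z; have [zL ez] := fold_path_surj (ltn_ord z).
  by exists (inord (if z < 2 then nat_of_ord z else z + 2 * j)); apply: ord_inj; rewrite hE inordK.
- move=> x1 x2 e; rewrite !inE negb_or => /andP [n0 n1].
  have ge2 : 2 <= fold_path x1.
    by move: n0 n1; rewrite !neq_ord o0 o1 hE; move: (fold_path x1) => a; lia.
  by apply: ord_inj; apply: fold_path_inj => //; rewrite -!hE e.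
Qed.

End FoldPath.

Unset Implicit Arguments.

Theorem theorem2 (n : nat) : 2 <= n ->
  hajos_number_le 3 (DC (2 ^ n + 1)) (n * (2 ^ (n + 2) + n + 5) %/ 2 - 7) /\
  (forall m : nat, 2 ^ (n - 1) + 1 < 2 * m + 1 < 2 ^ n + 1 ->
     hajos_number_le 3 (DC (2 * m + 1)) (n * (2 ^ (n + 2) + n + 5) %/ 2 - 5)).
Proof.
move=> n2; have n1 : 1 <= n by lia.
have reach := reachable_cycle_pow2 n1.
have B14 := hajos_bound_numer_ge n1.
split; first by rewrite addn1; apply: hajos_number_le_reachable reach (leqnn _).
move=> q /andP [lo hi]; rewrite addn1.
have eP : 2 ^ n = 2 * 2 ^ (n - 1) by rewrite -expnS; congr (_ ^ _); lia.
have q2 : 2 <= q by lia.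
have j1 : 1 <= 2 ^ (n - 1) - q by lia.
have eL : 2 ^ n = 2 * q + 2 * (2 ^ (n - 1) - q) by lia.
rewrite eL in reach.
apply: hajos_number_le_reachable
  (reachable_bind reach (fun s hc _ av => reachable_fold_path q2 j1 hc av)) _.
by rewrite /hajos_bound; move: (n * _) B14 => B ?; lia.
Qed.
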